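(* Let $(G,S)$ and $(H,S)$ be two compatible $d$-labeled boundaried graphs such that $\mathbf{Aux}(G,S)\oplus\mathbf{Aux}(H,S)$ has no cycles. If $F$ is an $S$-block of $(G,S)\oplus(H,S)$ and $uv$ is an edge of $F$, then $uv$ is contained in some $S$-block of $G$ or of $H$.
   Context: A block of a graph is a maximal connected subgraph without a cut vertex. A block $d$-labeling of a graph whose blocks have at most $d$ vertices is a map $V(G)\to[d]$ injective on each block; a $d$-labeled boundaried graph is a pair $(G,S)$ with $S\subseteq V(G)$ and $G$ carrying such a labeling. $(G,S)$ and $(H,S)$ are compatible if $V(G-S)\cap V(H-S)=\emptyset$, $G[S]=H[S]$, and labels agree on $S$. The sum $(G,S)\oplus(H,S)$ is the graph obtained from the disjoint union of $G$ and $H$ by identifying corresponding vertices of $S$ and removing duplicate edges inside $S$. For a boundaried graph $(G,S)$, an $S$-block is a block of $G$ containing an edge of $G[S]$ (for the sum, $S$-blocks are blocks of the sum containing an edge of $G[S]$). $\mathbf{Aux}(G,S)$ is the bipartite graph whose vertices are the connected components of $G$ and the connected components of $G[S]$, a component $C_1$ of $G$ adjacent to a component $C_2$ of $G[S]$ iff $C_2\subseteq C_1$; $\mathbf{Aux}(G,S)\oplus\mathbf{Aux}(H,S)$ is the disjoint union of $\mathbf{Aux}(G,S)$ and $\mathbf{Aux}(H,S)$ with the vertices corresponding to the same component of $G[S]=H[S]$ identified. *)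

From mathcomp Require Import all_boot.
Set Implicit Arguments. Unset Strict Implicit. Unset Printing Implicit Defensive.

(* Subgraphs relevant here (blocks,
   components) are induced subgraphs, represented by their vertex sets. *)

Section Graphs.
Variable T : finType.

Definition is_graph (V : {set T}) (e : rel T) : Prop :=
  [/\ symmetric e, irreflexive e & forall x y, e x y -> (x \in V) && (y \in V)].

Definition conn_in (e : rel T) (B : {set T}) (x y : T) : bool :=
  connect (fun a b => [&& e a b, a \in B & b \in B]) x y.

Definition connected_in (e : rel T) (B : {set T}) : Prop :=
  B != set0 /\ {in B &, forall x y, conn_in e B x y}.

(* v is a cut vertex of e[B]: removing it increases the number of
   components, i.e. it separates two vertices that were connected in e[B]. *)
Definition cut_vertex (e : rel T) (B : {set T}) (v : T) : Prop :=
  v \in B /\ exists x y, [/\ x \in B :\ v, y \in B :\ v, conn_in e B x y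
                           & ~~ conn_in e (B :\ v) x y].

Definition biconn (e : rel T) (B : {set T}) : Prop :=
  connected_in e B /\ forall v, ~ cut_vertex e B v.

Definition is_block (V : {set T}) (e : rel T) (B : {set T}) : Prop :=
  [/\ B \subset V, biconn e B &
      forall B' : {set T}, B \subset B' -> B' \subset V -> biconn e B' -> B' = B].

Definition is_Sblock (V : {set T}) (e : rel T) (S : {set T}) (B : {set T}) : Prop :=
  is_block V e B /\
  exists x y, [/\ x \in S, y \in S, e x y, x \in B & y \in B].

Definition block_labeling (d : nat) (V : {set T}) (e : rel T) (l : T -> 'I_d) : Prop :=
  forall B, is_block V e B -> #|B| <= d /\ {in B &, injective l}.

Definition is_comp (V : {set T}) (e : rel T) (C : {set T}) : Prop :=
  exists2 x, x \in V & C = [set y in V | conn_in e V x y].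

(* Aux(G,S) (+) Aux(H,S): vertices are tagged sets
   (0, C) with C a component of G, (1, C) with C a component of H,
   (2, C) with C a component of G[S] = H[S] (shared, i.e. identified);
   a component C1 of G (resp. H) is adjacent to a component C2 of G[S]
   iff C2 is contained in C1. *)
Definition aux_node (VG : {set T}) (eG : rel T) (VH : {set T}) (eH : rel T)
    (S : {set T}) (a : nat * {set T}) : Prop :=
  (a.1 = 0 /\ is_comp VG eG a.2) \/ (a.1 = 1 /\ is_comp VH eH a.2)
  \/ (a.1 = 2 /\ is_comp S eG a.2).

Definition aux_adj0 (a b : nat * {set T}) : bool :=
  ((a.1 == 0) || (a.1 == 1)) && (b.1 == 2) && (b.2 \subset a.2).

Definition aux_adj VG eG VH eH S (a b : nat * {set T}) : Prop :=
  aux_node VG eG VH eH S a /\ aux_node VG eG VH eH S b /\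
  (aux_adj0 a b \/ aux_adj0 b a).

Definition aux_sum_acyclic VG eG VH eH S : Prop :=
  ~ exists c : seq (nat * {set T}),
      [/\ 3 <= size c, uniq c &
          forall i, i < size c ->
            aux_adj VG eG VH eH S (nth (0, set0) c i)
                                  (nth (0, set0) c (i.+1 %% size c))].

End Graphs.

(* Let uv be an edge of G (the case of H is symmetric) and B the block of G
   containing it.  B stays biconnected in the sum, so the block F contains B,
   and if F = B the S-edge of F lies in B.  Otherwise F contains a path between
   two distinct vertices p, q of B using no edge inside B.  Let A be the
   component of G containing B.  The path leaves A only through vertices of S,
   and between leaving A at s and re-entering it at s' it joins s to s' in the
   sum outside A; if s and s' were not connected in G[S], then A, the
   component of G[S] containing s, the Aux vertices met along the excursion and
   the component of G[S] containing s' would close a cycle in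
   Aux(G,S) (+) Aux(H,S).  Rerouting every excursion through G[S] yields a walk
   of G from p to q whose edges inside B all belong to G[S]; as B is a block of
   G, such a walk has an edge inside B. *)

From mathcomp Require Import all_boot.
Set Implicit Arguments. Unset Strict Implicit. Unset Printing Implicit Defensive.

Lemma path_all_targets (T : Type) (r : rel T) (A : pred T) x s :
  (forall a b, r a b -> A b) -> path r x s -> all A s.
Proof. by move=> rA; elim: s x => //= y s IH x /andP[/rA -> /IH]. Qed.

Section Walks.
Variable T : eqType.
Implicit Types (r : rel T) (A : pred T).

Lemma walk_segments r A (P : rel T) x s :
  reflexive P -> transitive P ->
  (forall a c t, A a -> A c -> ~~ has A t -> path r a (rcons t c) -> P a c) ->
  path r x s -> A x -> A (last x s) -> P x (last x s).
Proof.
move=> reflP transP segP.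
elim: {s}_.+1 {-2}s x (ltnSn (size s)) => // n IHn s x.
have [/split_find[c t s' Ac tA] | /hasPn sA] := boolP (has A s); last first.
  by case: s sA => //= y s /(_ (last y s) (mem_last y s)) /negP.
rewrite size_cat size_rcons ltnS cat_path last_cat last_rcons => lt_n /andP[pt ps'] Ax Alast.
apply: (transP c); first exact: segP pt.
by apply: IHn => //; apply: leq_ltn_trans lt_n; rewrite leq_addl.
Qed.

Lemma path_rcons_rev r x s y : symmetric r ->
  path r x (rcons s y) -> path r y (rcons (rev s) x).
Proof.
move=> rsym pth; have := rev_path r x (rcons s y).
rewrite last_rcons belast_rcons rev_cons => ->.
by apply: sub_path pth => a b; rewrite /= rsym.
Qed.

Lemma cycle_nth r x0 c : cycle r c ->
  forall i, i < size c -> r (nth x0 c i) (nth x0 c (i.+1 %% size c)).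
Proof.
case: c => // x p cyc i ltip; move/(pathP x): cyc => /(_ i); rewrite size_rcons.
move=> /(_ ltip); rewrite -rcons_cons !nth_rcons ltip (set_nth_default x0 x ltip) if_same.
have [ltip' | geip] := ltnP i (size p).
  by rewrite modn_small // (set_nth_default x0 x ltip').
have -> : i = size p by apply/eqP; rewrite eqn_leq geip -ltnS ltip.
by rewrite modnn.
Qed.

End Walks.

Section Connect.
Variable T : finType.
Implicit Types (r : rel T) (B : {set T}).

Lemma connect_exit r B z y : z \notin B -> y \in B -> connect r z y ->
  exists t c, c \in B /\ path [rel a b | r a b && ~~ ((a \in B) && (b \in B))] z (rcons t c).
Proof.
move=> zB yB /connectP[s]; elim: s z zB => [|x s IH] z zB /= => [_ yz|/andP[rzx ps] ys].
  by rewrite -yz yB in zB.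
have rzx' : r z x && ~~ ((z \in B) && (x \in B)) by rewrite rzx (negbTE zB).
have [xB | xB] := boolP (x \in B); first by exists [::], x; rewrite /= rzx' xB.
by have [t [c [cB pt]]] := IH x xB ps ys; exists (x :: t), c; rewrite /= rzx'.
Qed.

Lemma connect_map (U : finType) (r' : rel U) (f : T -> U) r x y :
  (forall a b, r a b -> connect r' (f a) (f b)) -> connect r x y -> connect r' (f x) (f y).
Proof.
move=> fr /connectP[s]; elim: s x => [|z s IH] x /= => [_ -> //|/andP[rxz ps] yE].
exact: connect_trans (fr _ _ rxz) (IH _ ps yE).
Qed.

Lemma no_ucycle_bypass r a n1 n2 :
  (forall c, 3 <= size c -> uniq c -> ~~ cycle r c) ->
  r a n1 -> r n2 a -> n1 != n2 ->
  connect [rel x y | [&& r x y, x != a & y != a]] n1 n2 -> False.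
Proof.
move=> acyc ra1 r2a n12 /connectP[s ps n2E].
case: (shortenP ps) n2E => p pp up _ n2E.
case: p pp up n2E => [|n p] pp up n2E; first by rewrite n2E eqxx in n12.
have n1a : n1 != a by case/andP: pp => /and3P[].
have pa : all (predC1 a) (n :: p) by apply: path_all_targets pp => x y /and3P[].
have uc : uniq [:: a, n1, n & p].
  rewrite cons_uniq up andbT inE eq_sym (negbTE n1a) /=.
  by apply/negP => /(allP pa); rewrite /= eqxx.
have cyc : cycle r [:: a, n1, n & p].
  have : path r n1 (rcons (n :: p) a).
    by rewrite rcons_path -n2E r2a andbT; apply: sub_path pp => x y /andP[].
  by rewrite /= ra1.
by move/negP: (acyc _ (isT : 3 <= size [:: a, n1, n & p]) uc).
Qed.

End Connect.

Section Connectivity.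
Variable T : finType.
Implicit Types (e : rel T) (B F V W : {set T}).

Lemma conn_in_sub e e' B B' x y :
  subrel e e' -> B \subset B' -> conn_in e B x y -> conn_in e' B' x y.
Proof.
move=> ee' BB'; apply: connect_sub => a b /and3P[eab aB bB]; apply: connect1.
by rewrite /= ee' // !(subsetP BB').
Qed.

Lemma conn_in_subset e B B' x y : B \subset B' -> conn_in e B x y -> conn_in e B' x y.
Proof. exact: conn_in_sub. Qed.

Lemma conn_in_refl e B x : conn_in e B x x.
Proof. exact: connect0. Qed.

Lemma conn_in_trans e B : transitive (conn_in e B).
Proof. exact: connect_trans. Qed.

Lemma conn_in_sym e B : symmetric e -> symmetric (conn_in e B).
Proof.
move=> esym; apply: sym_connect_sym => a b /=.
by rewrite esym; case: (a \in B); case: (b \in B); rewrite ?andbT ?andbF.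
Qed.

Lemma conn_in_edge e B x y : e x y -> x \in B -> y \in B -> conn_in e B x y.
Proof. by move=> exy xB yB; apply: connect1; rewrite /= exy xB yB. Qed.

Lemma eq_conn_in e e' B : {in B &, e =2 e'} -> conn_in e B =2 conn_in e' B.
Proof.
move=> ee' x y; apply: eq_connect => a b /=.
by have [aB|] := boolP (a \in B); have [bB|] := boolP (b \in B); rewrite ?andbF ?ee'.
Qed.

Definition conn_all e W := [forall x in W, forall y in W, conn_in e W x y].

Lemma conn_allP e W : reflect {in W &, forall x y, conn_in e W x y} (conn_all e W).
Proof.
apply: (iffP forall_inP) => [h x y xW | h x xW]; first exact/forall_inP/h.
by apply/forall_inP => y; apply: h.
Qed.

Lemma conn_all_sub e e' W : subrel e e' -> conn_all e W -> conn_all e' W.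
Proof.
move=> ee' /conn_allP connW; apply/conn_allP => x y xW yW.
exact: conn_in_sub ee' (subxx W) (connW x y xW yW).
Qed.

Lemma conn_all_attach e W1 W2 : symmetric e -> conn_all e W1 ->
  {in W2, forall x, exists2 c, c \in W1 & conn_in e (W1 :|: W2) x c} ->
  conn_all e (W1 :|: W2).
Proof.
move=> esym /conn_allP conn1 att.
have to1 x : x \in W1 :|: W2 -> exists2 c, c \in W1 & conn_in e (W1 :|: W2) x c.
  by case/setUP => [xW1|/att//]; exists x; rewrite ?conn_in_refl.
apply/conn_allP => x y /to1[c cW1 xc] /to1[c' c'W1 yc']; apply: conn_in_trans xc _.
rewrite conn_in_sym // in yc'; apply: conn_in_trans yc'.
exact: conn_in_subset (subsetUl _ _) (conn1 _ _ cW1 c'W1).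
Qed.

Lemma conn_allU e W1 W2 c : symmetric e -> conn_all e W1 -> conn_all e W2 ->
  c \in W1 -> c \in W2 -> conn_all e (W1 :|: W2).
Proof.
move=> esym conn1 /conn_allP conn2 cW1 cW2; apply: conn_all_attach => // x xW2.
by exists c; last exact: conn_in_subset (subsetUr _ _) (conn2 _ _ xW2 cW2).
Qed.

Lemma conn_all_path e x s : symmetric e -> path e x s -> conn_all e [set:: x :: s].
Proof.
move=> esym; elim: s x => [|y s IH] x /=.
  by move=> _; rewrite set_seq1; apply/conn_allP => a b /set1P-> /set1P->; apply: conn_in_refl.
case/andP=> exy /IH conn_s; rewrite set_cons setUC.
apply: conn_all_attach => // z /set1P->; exists y; first by rewrite inE mem_head.
by apply: conn_in_edge; rewrite // !inE ?mem_head ?eqxx ?orbT.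
Qed.

Lemma conn_in_walk e W x s : symmetric e -> path e x s -> {subset x :: s <= W} ->
  {in x :: s &, forall a b, conn_in e W a b}.
Proof.
move=> esym /(conn_all_path esym)/conn_allP conn_s sW a b ap bp.
apply: conn_in_subset (conn_s a b _ _); rewrite ?inE //.
by apply/subsetP => z; rewrite inE; apply: sW.
Qed.

Lemma conn_in_walkD1 e x s w : symmetric e -> path e x s -> uniq (x :: s) ->
  {in [set:: x :: s] :\ w, forall t, exists2 c, c \in [set x; last x s] :\ w &
     conn_in e ([set:: x :: s] :\ w) t c}.
Proof.
move=> esym pth uq t /setD1P[tw]; rewrite inE => tp.
have walk y q : {subset y :: q <= x :: s} -> w \notin y :: q -> path e y q ->
    {in y :: q &, forall a b, conn_in e ([set:: x :: s] :\ w) a b}.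
  move=> sq wq pq; apply: (conn_in_walk esym pq) => z zq; apply/setD1P.
  by split; [apply: contraNneq wq => <- | rewrite inE sq].
have [wp | wp] := boolP (w \in x :: s); last first.
  exists (last x s); last by apply: (walk x s) => //; apply: mem_last.
  apply/setD1P; split; last by rewrite !inE eqxx orbT.
  by apply: contraNneq wp => <-; apply: mem_last.
have [p1 [p2 def]] : exists p1 p2, x :: s = p1 ++ w :: p2.
  by case: (x :: s) / (splitPr wp) => p1 p2; exists p1, p2.
rewrite def cat_uniq in uq; case/and3P: uq => _ /hasPn wp1 /andP[wp2 _].
have /andP[pth1 pth2] : sorted e (rcons p1 w) && path e w p2.
  by rewrite -sorted_cat_cons -def.
have [tp2 | tp2] := boolP (t \in p2).
  have [y [q p2E]] : exists y q, p2 = y :: q by case: (p2) tp2 => // y q; exists y, q.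
  subst p2; case/andP: pth2 => _ pq.
  have lastE : last x s = last y q by have := congr1 (last x) def; rewrite last_cat.
  have sq : {subset y :: q <= x :: s} by move=> z zq; rewrite def mem_cat in_cons zq !orbT.
  exists (last y q); first last.
    exact: (walk y q sq wp2 pq t (last y q) tp2 (mem_last y q)).
  apply/setD1P; rewrite lastE !inE eqxx orbT; split => //.
  by apply: contraNneq wp2 => <-; apply: mem_last.
have tp1 : t \in p1.
  rewrite def mem_cat in tp.
  by case/orP: tp => //; rewrite inE (negbTE tw) (negbTE tp2).
have [q p1E] : exists q, p1 = x :: q.
  by case: (p1) def tp1 => // y q [-> _] _; exists q.
subst p1; have wq : w \notin x :: q by apply: wp1; apply: mem_head.
have sq : {subset x :: q <= x :: s} by move=> z zq; rewrite def mem_cat zq.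
move: pth1; rewrite /= rcons_path => /andP[pq _].
exists x; last exact: (walk x q sq wq pq t x tp1 (mem_head x q)).
by apply/setD1P; rewrite !inE eqxx; split => //; apply: contraNneq wq => <-; apply: mem_head.
Qed.

Definition biconnb e B := [&& B != set0, conn_all e B & [forall w, conn_all e (B :\ w)]].

Lemma biconnP e B : reflect (biconn e B) (biconnb e B).
Proof.
apply: (iffP and3P) => [[B0 /conn_allP connB /forallP connBw] | [[B0 connB] nocut]].
  split=> // w [_ [x [y [xBw yBw _ /negP[]]]]].
  exact: (conn_allP _ _ (connBw w)).
split=> //; first exact/conn_allP.
apply/forallP => w; apply/conn_allP => x y xBw yBw; apply/negPn/negP => nxy.
have [wB | wB] := boolP (w \in B).
  apply: (nocut w); split=> //; exists x, y; split=> //.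
  by apply: connB; [case/setD1P: xBw | case/setD1P: yBw].
have BwE : B :\ w = B by apply/setDidPl; rewrite disjoint_sym disjoints1.
by rewrite BwE in xBw yBw nxy; rewrite connB in nxy.
Qed.

Lemma biconn_sub e e' B : subrel e e' -> biconn e B -> biconn e' B.
Proof.
move=> ee' /biconnP/and3P[B0 connB /forallP connBw]; apply/biconnP/and3P.
split=> //; first exact: conn_all_sub connB.
by apply/forallP => w; apply: conn_all_sub (connBw w).
Qed.

Lemma biconnU e B1 B2 x y : symmetric e -> x != y ->
  x \in B1 :&: B2 -> y \in B1 :&: B2 -> biconn e B1 -> biconn e B2 -> biconn e (B1 :|: B2).
Proof.
move=> esym xy /setIP[xB1 xB2] /setIP[yB1 yB2].
move=> /biconnP/and3P[_ conn1 /forallP conn1w] /biconnP/and3P[_ conn2 /forallP conn2w].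
apply/biconnP/and3P; split.
- by apply/set0Pn; exists x; rewrite inE xB1.
- exact: conn_allU conn1 conn2 xB1 xB2.
apply/forallP => w; rewrite setDUl.
have [c cB1 cB2] : exists2 c, c \in B1 :\ w & c \in B2 :\ w.
  have [xw | xw] := eqVneq x w; last by exists x; rewrite in_setD1 xw.
  by exists y; rewrite in_setD1 -xw eq_sym xy.
exact: conn_allU (conn1w w) (conn2w w) cB1 cB2.
Qed.

Lemma biconn_edge e x y : symmetric e -> e x y -> biconn e [set x; y].
Proof.
move=> esym exy.
have conn_xy W : W \subset [set x; y] -> conn_all e W.
  move=> sW; apply/conn_allP => a b aW bW.
  have [-> | ab] := eqVneq a b; first exact: conn_in_refl.
  move: ab (aW) (bW).
  have /set2P[] := subsetP sW a aW => ->; have /set2P[] := subsetP sW b bW => ->;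
    by rewrite ?eqxx // => _ xW yW; apply: conn_in_edge; rewrite // esym.
apply/biconnP/and3P; split; first by apply/set0Pn; exists x; rewrite !inE eqxx.
  exact: conn_xy.
by apply/forallP => w; apply: conn_xy; apply: subD1set.
Qed.

Lemma block_exists (V X : {set T}) e :
  X \subset V -> biconn e X -> exists2 B, is_block V e B & X \subset B.
Proof.
move=> XV /biconnP bX.
pose blockish B := [&& X \subset B, B \subset V & biconnb e B].
have blockX : blockish X by rewrite /blockish subxx XV.
case: (arg_maxnP (fun B => #|B|) blockX) => B /and3P[XB BV /biconnP bB] maxB.
exists B => //; split=> // B' BB' B'V /biconnP bB'.
apply/eqP; rewrite eq_sym eqEcard BB' /=; apply: maxB.
by rewrite /blockish (subset_trans XB BB') B'V.
Qed.

Lemma biconn_subset_block e V F B x y : symmetric e -> is_block V e F ->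
  biconn e B -> B \subset V -> x != y -> x \in F :&: B -> y \in F :&: B -> B \subset F.
Proof.
move=> esym [FV bF maxF] bB BV xy xFB yFB.
have FBV : F :|: B \subset V by rewrite subUset FV.
by rewrite -(maxF _ (subsetUl F B) FBV (biconnU esym xy xFB yFB bF bB)) subsetUr.
Qed.

Lemma block_no_ear V e B x y P : is_graph V e -> is_block V e B ->
  x \in B -> y \in B -> x != y -> P != [::] -> {in P, forall z, z \notin B} ->
  uniq P -> path e x (rcons P y) -> False.
Proof.
move=> [esym _ eV] [BV bB maxB] xB yB xy P0 PB uP pth.
pose E := [set:: x :: rcons P y].
have xE : x \in E by rewrite inE mem_head.
have uE : uniq (x :: rcons P y).
  rewrite /= mem_rcons !inE negb_or xy rcons_uniq uP andbT.
  by rewrite (contra (PB x)) ?xB // (contra (PB y)) ?yB.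
have EV : E \subset V.
  apply/subsetP => z; rewrite inE in_cons => /orP[/eqP-> | zP]; first exact: (subsetP BV).
  by apply: (allP (path_all_targets _ pth)) zP => a b /eV/andP[].
have bBE : biconn e (B :|: E).
  move/biconnP/and3P: bB => [_ connB /forallP connBw].
  apply/biconnP/and3P; split; first by apply/set0Pn; exists x; rewrite inE xB.
    exact: conn_allU connB (conn_all_path esym pth) xB xE.
  apply/forallP => w; rewrite setDUl; apply: conn_all_attach (connBw w) _ => // t tEw.
  have [c cw tc] := conn_in_walkD1 esym pth uE tEw.
  exists c; last exact: conn_in_subset (subsetUr _ _) tc.
  by move: cw; rewrite last_rcons !inE => /andP[-> /orP[] /eqP->].
have [z zP] : exists z, z \in P by case: (P) P0 => // z ? _; exists z; rewrite mem_head.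
have : z \in B :|: E by rewrite !inE mem_rcons inE zP !orbT.
by rewrite (maxB _ (subsetUl _ _) _ bBE) ?subUset ?BV // => zB; move: (PB z zP); rewrite zB.
Qed.

Lemma block_connect_edge V e B (R : rel T) p q : is_graph V e -> is_block V e B ->
  subrel R e -> p \in B -> q \in B -> p != q -> connect R p q ->
  exists y y', [/\ y \in B, y' \in B & R y y'].
Proof.
move=> gV blB Re pB qB pq /connectP[s pth qE].
have [/exists_inP[y yB /exists_inP[y' y'B Ryy']] | noR] :=
  boolP [exists y in B, exists y' in B, R y y']; first by exists y, y'.
case/negP: pq; rewrite qE.
apply: (walk_segments (A := fun z => z \in B) (P := eq_op)) pth _ _ => //;
  [by move=> ? ? ? /eqP-> /eqP-> | | by move: qB; rewrite qE].
move=> a c t aB cB /hasPn tB pt; apply/negPn/negP => ac.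
have [p' [pp' up' sub' lastE]] : exists p',
    [/\ path R a p', uniq (a :: p'), {subset p' <= rcons t c} & last a p' = c].
  by case: (shortenP pt) (last_rcons a t c) => p' *; exists p'.
case/lastP: p' pp' up' sub' lastE => [/= _ _ _ ac' | P c' pp' up' sub'].
  by rewrite ac' eqxx in ac.
rewrite last_rcons => c'E; subst c'.
have [P0 | P0] := eqVneq P [::].
  move: pp'; rewrite P0 /= andbT => Rac.
  by case/exists_inP: noR; exists a => //; apply/exists_inP; exists c.
apply: (block_no_ear gV blB aB cB ac P0).
- move=> z zP; have := sub' z; rewrite !mem_rcons !inE zP orbT => /(_ isT) /orP[/eqP zc|/tB //].
  by move: up'; rewrite -rcons_cons rcons_uniq -zc inE zP orbT.
- by move: up'; rewrite -rcons_cons rcons_uniq => /andP[_ /andP[]].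
- exact: sub_path pp'.
Qed.

Lemma biconn_ear e F B z x y : symmetric e -> biconn e F ->
  B \subset F -> z \in F :\: B -> x \in B -> y \in B -> x != y ->
  exists p q t, [/\ p \in B, q \in B, p != q &
    path [rel a b | e a b && ~~ ((a \in B) && (b \in B))] p (rcons t q)].
Proof.
move=> esym /biconnP/and3P[_ /conn_allP connF /forallP connFw] BF /setDP[zF zB] xB yB xy.
set rB := [rel a b | e a b && ~~ ((a \in B) && (b \in B))].
have rBsym : symmetric rB by move=> a b /=; rewrite esym [(a \in B) && _]andbC.
have [t1 [p [pB pth1]]] := connect_exit zB xB (connF z x zF (subsetP BF x xB)).
have [y0 [y0B y0p]] : exists y0, y0 \in B /\ y0 != p.
  by have [xp | xp] := eqVneq x p; [exists y; rewrite -xp eq_sym | exists x].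
have zp : z != p by apply: contraNneq zB => ->.
have /conn_allP connFp := connFw p.
have zFp : z \in F :\ p by rewrite in_setD1 zp.
have y0Fp : y0 \in F :\ p by rewrite in_setD1 y0p (subsetP BF).
have [t2 [q [qB pth2]]] := connect_exit zB y0B (connFp z y0 zFp y0Fp).
have qp : q != p.
  have qFp : q \in F :\ p.
    apply: (allP (path_all_targets (A := fun b => b \in F :\ p) _ pth2)).
      by move=> a b /andP[/and3P[]].
    by rewrite mem_rcons mem_head.
  by case/setD1P: qFp.
exists p, q, (rcons (rev t1) z ++ t2); split=> //; first by rewrite eq_sym.
rewrite rcons_cat cat_path last_rcons.
apply/andP; split;
  [apply: path_rcons_rev => //; apply: (sub_path _ pth1) | apply: (sub_path _ pth2)];
  by move=> a b /andP[/and3P[eab _ _] nB]; rewrite /= eab.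
Qed.

Lemma is_Sblock_eq e e' V S B :
  e =2 e' -> is_Sblock V e S B -> is_Sblock V e' S B.
Proof.
move=> ee'; have sub_ee' : subrel e e' by move=> x y; rewrite ee'.
have sub_e'e : subrel e' e by move=> x y; rewrite ee'.
move=> [[BV bB maxB] [x [y [xS yS exy xB yB]]]]; split; last by exists x, y; rewrite -ee'.
split=> [||B' BB' B'V /(biconn_sub sub_e'e)]; [by [] | exact: biconn_sub bB | exact: maxB].
Qed.

Definition comp_of V e z := [set y in V | conn_in e V z y].

Definition comps V e := [set comp_of V e z | z in V].

Lemma is_compP V e C : reflect (is_comp V e C) (C \in comps V e).
Proof. exact: imsetP. Qed.

Lemma comp_of_eq V e a b : symmetric e -> conn_in e V a b ->
  comp_of V e a = comp_of V e b.
Proof.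
move=> esym ab; apply/setP => y; rewrite !inE; case: (y \in V) => //=.
apply/idP/idP; last exact: conn_in_trans.
by apply: conn_in_trans; rewrite conn_in_sym.
Qed.

Lemma comp_of_sub e e' W V a b :
  W \subset V -> subrel (conn_in e W) (conn_in e' V) -> conn_in e' V b a ->
  comp_of W e a \subset comp_of V e' b.
Proof.
move=> WV WV' ba; apply/subsetP => y; rewrite !inE => /andP[yW ay].
by rewrite (subsetP WV) //= (conn_in_trans ba) ?WV'.
Qed.

End Connectivity.

Section AuxGraph.
Variables (T : finType) (VG VH S : {set T}) (eG eH : rel T).

(* (Some false, C), (Some true, C) and (None, C) stand for a component C of G,
   of H and of G[S]; aux_tag turns them into the tagged vertices (0, C), (1, C)
   and (2, C) of [aux_sum_acyclic]. *)
Definition aux_tag (n : option bool * {set T}) : nat * {set T} :=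
  (if n.1 is Some b then nat_of_bool b else 2, n.2).

Definition aux_vertex (n : option bool * {set T}) : bool :=
  n.2 \in if n.1 is Some b then if b then comps VH eH else comps VG eG else comps S eG.

Definition aux_edge : rel (option bool * {set T}) := fun a b =>
  [&& aux_vertex a, aux_vertex b &
      aux_adj0 (aux_tag a) (aux_tag b) || aux_adj0 (aux_tag b) (aux_tag a)].

Lemma aux_edge_sym : symmetric aux_edge.
Proof. by move=> a b; rewrite /aux_edge andbCA orbC. Qed.

Lemma aux_tag_inj : injective aux_tag.
Proof. by move=> [[[]|] C] [[[]|] D] [] //= ->. Qed.

Lemma aux_vertexP n : aux_vertex n -> aux_node VG eG VH eH S (aux_tag n).
Proof.
by case: n => [[[]|] C] /is_compP compC; rewrite /aux_node /=; [right; left|left|right; right].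
Qed.

Lemma aux_acyclic : aux_sum_acyclic VG eG VH eH S ->
  forall c, 3 <= size c -> uniq c -> ~~ cycle aux_edge c.
Proof.
move=> acyc c c3 uc; apply/negP => cyc; apply: acyc; exists (map aux_tag c).
rewrite size_map map_inj_uniq //; last exact: aux_tag_inj.
split=> // i ltic; have := cycle_nth (None, set0) cyc ltic.
rewrite !(nth_map (None, set0)) ?ltn_pmod //; last by case: (size c) c3.
by case/and3P=> /aux_vertexP a1 /aux_vertexP a2 adj; split; [|split; [|apply/orP]].
Qed.

End AuxGraph.

Section SumGraph.
Variables (T : finType) (VG VH S : {set T}) (eG eH : rel T).
Hypotheses (hG : is_graph VG eG) (hH : is_graph VH eH) (SG : S \subset VG) (SH : S \subset VH).
Hypothesis disjGH : [disjoint VG :\: S & VH :\: S].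
Hypothesis eGH_S : {in S &, forall x y, eG x y = eH x y}.

Let eM : rel T := fun x y => eG x y || eH x y.
Let VM := VG :|: VH.

Hypothesis aux_acyc : forall c, 3 <= size c -> uniq c -> ~~ cycle (aux_edge VG VH S eG eH) c.

Lemma in_S x : x \in VG -> x \in VH -> x \in S.
Proof.
move=> xG xH; apply/negPn/negP => xS.
by have /pred0P/(_ x) := disjGH; rewrite /= !inE xS xG xH.
Qed.

Lemma eM_sym : symmetric eM.
Proof. by case: hG hH => symG _ _ [symH _ _] x y; rewrite /eM symG symH. Qed.

Lemma eM_cases x y : eM x y ->
  [/\ eG x y, x \in VG & y \in VG] \/ [/\ eH x y, x \in VH & y \in VH].
Proof.
by case: hG hH => _ _ VeG [_ _ VeH] /orP[/[dup]/VeG | /[dup]/VeH] /andP[];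
  [left | right].
Qed.

Lemma eM_VM x y : eM x y -> y \in VM.
Proof. by case/eM_cases => -[_ _ yV]; rewrite inE yV ?orbT. Qed.

Lemma eM_G x y : eM x y -> x \in VG -> y \in VG -> eG x y.
Proof. by case/eM_cases => -[exy xV yV] // xG yG; rewrite eGH_S // in_S. Qed.

Lemma conn_S_G : subrel (conn_in eG S) (conn_in eG VG).
Proof. by move=> x y; apply: conn_in_subset. Qed.

Lemma conn_S_H : subrel (conn_in eG S) (conn_in eH VH).
Proof. by move=> x y; rewrite (eq_conn_in eGH_S); apply: conn_in_subset. Qed.

Definition aux_of z : option bool * {set T} :=
  if z \in S then (None, comp_of S eG z)
  else if z \in VG then (Some false, comp_of VG eG z) else (Some true, comp_of VH eH z).

Lemma aux_vertex_of z : z \in VM -> aux_vertex VG VH S eG eH (aux_of z).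
Proof.
rewrite /aux_of inE; case: ifP => zS; first by move=> _; apply/imsetP; exists z.
by case: ifP => zG /= zV; apply/imsetP; exists z; rewrite // -(orFb (z \in VH)) -zG.
Qed.

Lemma aux_of_edge a b : eM a b ->
  aux_of a = aux_of b \/ aux_edge VG VH S eG eH (aux_of a) (aux_of b).
Proof.
case: hG hH => symG _ _ [symH _ _].
have notG x : x \in VH -> x \notin S -> x \in VG = false.
  by move=> xH; apply: contraNF => xG; apply: in_S.
have leave x y : eM x y -> x \in S -> y \notin S ->
    aux_edge VG VH S eG eH (aux_of y) (aux_of x).
  move=> exy xS yS; rewrite /aux_edge !aux_vertex_of ?(eM_VM exy) //=; last first.
    by rewrite inE (subsetP SG).
  rewrite /aux_of xS (negbTE yS) /aux_adj0 /=.
  case/eM_cases: exy => -[exy _ yV]; first rewrite yV /=.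
    rewrite orbF; apply: comp_of_sub SG conn_S_G _.
    by apply: conn_in_edge; [rewrite symG | | apply: (subsetP SG)].
  rewrite notG //= orbF; apply: comp_of_sub SH conn_S_H _.
  by apply: conn_in_edge; [rewrite symH | | apply: (subsetP SH)].
move=> eab; have [aS | aS] := boolP (a \in S); have [bS | bS] := boolP (b \in S).
- left; rewrite /aux_of aS bS; congr (_, _); apply: comp_of_eq => //.
  by apply: conn_in_edge; rewrite // eM_G // (subsetP SG).
- by right; rewrite aux_edge_sym; apply: leave.
- by right; apply: leave; rewrite // eM_sym.
left; rewrite /aux_of (negbTE aS) (negbTE bS).
case/eM_cases: eab => -[eab aV bV]; [rewrite aV bV | rewrite !notG //];
  by congr (_, _); apply: comp_of_eq => //; apply: conn_in_edge.
Qed.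

Section Excursion.
Variable u : T.
Hypothesis uG : u \in VG.

Let A := comp_of VG eG u.
Let nA : option bool * {set T} := (Some false, A).

Lemma comp_closed a b : a \in A -> eG a b -> b \in A.
Proof.
case: hG => _ _ VeG; rewrite !inE => /andP[aG ua] eab.
have /andP[_ bG] := VeG _ _ eab; rewrite bG /=.
by apply: conn_in_trans ua _; apply: conn_in_edge.
Qed.

Lemma comp_exit_S a b : a \in A -> eM a b -> b \notin A -> a \in S.
Proof.
move=> aA eab bA; case/eM_cases: eab => -[eab aV _].
  by rewrite (comp_closed aA eab) in bA.
by apply: in_S => //; case/setIdP: aA.
Qed.

Lemma aux_of_neq z : z \in VM -> (z \in S) || (z \notin A) -> aux_of z != nA.
Proof.
rewrite /aux_of; case: ifP => // zS; case: ifP => // zG _ /= zA.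
by apply: contra zA => /eqP[<-]; rewrite inE zG conn_in_refl.
Qed.

Lemma aux_edge_comp a : a \in A -> a \in S -> aux_edge VG VH S eG eH nA (aux_of a).
Proof.
move=> aA aS; rewrite /aux_edge aux_vertex_of ?inE ?(subsetP SG) //.
rewrite /aux_of aS /aux_vertex /aux_adj0 /= orbF; apply/andP; split.
  by apply/imsetP; exists u.
apply: comp_of_sub SG conn_S_G _.
by case/setIdP: aA.
Qed.

Lemma excursion_conn_S a c t : a \in A -> c \in A -> t != [::] -> ~~ has (mem A) t ->
  path eM a (rcons t c) -> conn_in eG S a c.
Proof.
move=> aA cA t0 /hasPn tA pth.
have aS : a \in S.
  case: t t0 tA pth => // y t _ tA /andP[eay _].
  by apply: comp_exit_S aA eay _; apply: tA; rewrite mem_head.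
have cS : c \in S.
  case/lastP: t t0 tA pth => // t' x _ tA; rewrite rcons_path last_rcons => /andP[_ exc].
  by apply: comp_exit_S cA _ (tA x _); [rewrite eM_sym | rewrite mem_rcons mem_head].
apply/idPn => nac.
(* Otherwise nA, aux_of a, the Aux vertices of the excursion and aux_of c close a cycle. *)
have ac : aux_of a != aux_of c.
  rewrite /aux_of aS cS; apply: contra nac => /eqP[acE].
  have : c \in comp_of S eG c by rewrite inE cS conn_in_refl.
  by rewrite -acE inE => /andP[].
pose okA z := (z \in VM) && (aux_of z != nA).
have okS z : z \in S -> okA z.
  move=> zS; have zV : z \in VM by rewrite inE (subsetP SG).
  by rewrite /okA zV aux_of_neq // zS.
have okAt : all okA (a :: rcons t c).
  rewrite /= okS //=; apply/allP => z zt.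
  have zV : z \in VM := allP (path_all_targets eM_VM pth) z zt.
  move: zt; rewrite mem_rcons in_cons => /orP[/eqP-> | zt]; first exact: okS.
  by rewrite /okA zV aux_of_neq // tA // orbT.
apply: (no_ucycle_bypass aux_acyc (aux_edge_comp aA aS) _ ac).
  by rewrite aux_edge_sym; apply: aux_edge_comp.
apply: (connect_map (r := [rel x y | [&& eM x y, okA x & okA y]])).
  move=> x y /and3P[exy /andP[_ xn] /andP[_ yn]].
  have [-> | exy'] := aux_of_edge exy; first exact: connect0.
  by apply: connect1; rewrite /= exy' xn yn.
apply/connectP; exists (rcons t c); last by rewrite last_rcons.
apply: sub_in_path okAt pth => x y xok yok exy.
by rewrite /= exy /=; apply/andP; split; [exact: xok | exact: yok].
Qed.

Lemma reroute_in_G (B : {set T}) p q t : {subset B <= A} -> p \in B -> q \in B ->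
  path [rel a b | eM a b && ~~ ((a \in B) && (b \in B))] p (rcons t q) ->
  connect [rel x y | eG x y && ((x \in S) && (y \in S) || ~~ ((x \in B) && (y \in B)))] p q.
Proof.
move=> BA pB qB pth; rewrite -(last_rcons p t q).
apply: (walk_segments (A := fun x => x \in A) (@connect0 _ _) (@connect_trans _ _) _ pth);
  [| exact: BA | by rewrite last_rcons BA].
move=> a c t' aA cA tA pt; have [t0 | t0] := eqVneq t' [::].
  move: pt; rewrite t0 /= => /andP[/andP[eac nB] _]; apply: connect1.
  by rewrite /= nB orbT eM_G //; [case/setIdP: aA | case/setIdP: cA].
apply: connect_sub (excursion_conn_S aA cA t0 tA (sub_path _ pt)); last by move=> x y /andP[].
by move=> x y /and3P[exy xS yS]; apply: connect1; rewrite /= exy xS yS.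
Qed.

End Excursion.

Lemma Sblock_sum_edgeG F u v : is_Sblock VM eM S F -> u \in F -> v \in F -> eG u v ->
  exists B, is_Sblock VG eG S B /\ [/\ u \in B, v \in B & eG u v].
Proof.
move=> [blF [a [b [aS bS eab aF bF]]]] uF vF euv.
case: (hG) => symG irrG VeG; have /andP[uG vG] := VeG _ _ euv.
have uv : u != v by apply: contraTneq euv => ->; rewrite irrG.
have uvG : [set u; v] \subset VG by apply/subsetP => x /set2P[] ->.
have [B blB /subsetP uvB] := block_exists uvG (biconn_edge symG euv).
have [uB vB] : u \in B /\ v \in B by rewrite !uvB ?set21 ?set22.
case: (blB) => BG bB _; exists B; split=> //; split=> //.
have eGM : subrel eG eM by move=> x y exy; rewrite /eM exy.
have BF : B \subset F.
  apply: biconn_subset_block eM_sym blF (biconn_sub eGM bB) _ uv _ _; rewrite ?inE ?uF ?uB ?vF //.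
  exact: subset_trans BG (subsetUl _ _).
have [FB | /subsetPn[z zF zB]] := boolP (F \subset B).
  by exists a, b; rewrite !(subsetP FB) // eM_G // (subsetP SG).
have zFB : z \in F :\: B by rewrite inE zF zB.
have [_ biconnF _] := blF.
have [p [q [t [pB qB pq pth]]]] := biconn_ear eM_sym biconnF BF zFB uB vB uv.
have BA : {subset B <= comp_of VG eG u}.
  move=> x xB; rewrite inE (subsetP BG) //=.
  case/biconnP/and3P: bB => _ /conn_allP connB _.
  exact: conn_in_subset BG (connB u x uB xB).
have RG : subrel [rel x y | eG x y && ((x \in S) && (y \in S) || ~~ ((x \in B) && (y \in B)))] eG.
  by move=> x y /andP[].
have [y [y' [yB y'B /andP[eyy' /orP[/andP[yS y'S] | nB]]]]] :=
  block_connect_edge hG blB RG pB qB pq (reroute_in_G uG BA pB qB pth).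
  by exists y, y'.
by rewrite yB y'B in nB.
Qed.

End SumGraph.

Lemma aux_sum_acyclic_swap (T : finType) (VG VH S : {set T}) (eG eH : rel T) :
  {in S &, forall x y, eG x y = eH x y} ->
  aux_sum_acyclic VG eG VH eH S -> aux_sum_acyclic VH eH VG eG S.
Proof.
move=> eGH_S acyc [c [c3 uc adjc]]; apply: acyc.
pose sw (n : nat * {set T}) := (if n.1 is 0 then 1 else if n.1 is 1 then 0 else n.1, n.2).
have swK : involutive sw by move=> [[|[|n]] C].
have sw_node n : aux_node VH eH VG eG S n -> aux_node VG eG VH eH S (sw n).
  case: n => n C; rewrite /aux_node /=.
  case=> [[-> compC] | [[-> compC] | [-> [x xS ->]]]]; [right; left | left | right; right];
    split=> //; exists x => //.
  by apply/setP => y; rewrite !inE (eq_conn_in eGH_S).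
have sw_adj0 n m : aux_adj0 n m -> aux_adj0 (sw n) (sw m).
  by case: n m => [[|[|n]] C] [[|[|[|m]]] D].
exists (map sw c); split; [by rewrite size_map | by rewrite (map_inj_uniq (can_inj swK)) |].
move=> i; rewrite size_map => ltic.
rewrite !(nth_map (0, set0)) ?ltn_pmod //; last by case: (size c) c3.
have [n1 [n2 adj]] := adjc i ltic; split; [exact: sw_node | split; [exact: sw_node |]].
by case: adj => adj; [left | right]; apply: sw_adj0.
Qed.

Theorem lemma3p3 (T : finType) (d : nat)
    (VG VH S : {set T}) (eG eH : rel T) (lG lH : T -> 'I_d)
    (* (G,S) and (H,S) are d-labeled boundaried graphs *)
    (hG : is_graph VG eG) (hH : is_graph VH eH)
    (hSG : S \subset VG) (hSH : S \subset VH)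
    (hlG : block_labeling VG eG lG) (hlH : block_labeling VH eH lH)
    (* compatibility *)
    (hdisj : [disjoint VG :\: S & VH :\: S])
    (hGS : {in S &, forall x y, eG x y = eH x y})
    (hlab : {in S, forall x, lG x = lH x})
    (* Aux(G,S) (+) Aux(H,S) has no cycles *)
    (hacyc : aux_sum_acyclic VG eG VH eH S)
    (* F is an S-block of (G,S) (+) (H,S), and uv is an edge of F *)
    (F : {set T}) (u v : T)
    (hF : is_Sblock (VG :|: VH) (fun x y => eG x y || eH x y) S F)
    (huF : u \in F) (hvF : v \in F) (huv : eG u v || eH u v) :
  (exists B, is_Sblock VG eG S B /\ [/\ u \in B, v \in B & eG u v]) \/
  (exists B, is_Sblock VH eH S B /\ [/\ u \in B, v \in B & eH u v]).
Proof.
case/orP: huv => euv; [left | right].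
  exact: Sblock_sum_edgeG hG hH hSG hSH hdisj hGS (aux_acyclic hacyc) _ _ _ hF huF hvF euv.
have hdisj' : [disjoint VH :\: S & VG :\: S] by rewrite disjoint_sym.
have hHS : {in S &, forall x y, eH x y = eG x y} by move=> x y xS yS; rewrite hGS.
have hacyc' := aux_acyclic (aux_sum_acyclic_swap hGS hacyc).
have hF' : is_Sblock (VH :|: VG) (fun x y => eH x y || eG x y) S F.
  by rewrite setUC; apply: is_Sblock_eq hF => x y; rewrite orbC.
exact: Sblock_sum_edgeG hH hG hSH hSG hdisj' hHS hacyc' _ _ _ hF' huF hvF euv.
Qed.
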